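(* There exist instances and a partition $\Pi$ of the players that maximizes the number of winning pools and, among all such partitions, is lexicographically optimal with respect to its sorted pool stakes (the smallest pool stake is maximized, then the second smallest, and so on), such that $\Pi$ is a Nash equilibrium under the proportional scheme but the proportional scheme is not Sybil-proof with respect to $\Pi$.
   Context: Oceanic model (including the purely atomic case with no non-atomic players): finitely many atomic players, player $i$ with stake $a_i>0$, and possibly a continuum of non-atomic players (a measurable set contributes stake equal to its measure); threshold $h>0$ with $a_i<h$. Pools partition all players; a pool $S$ has stake $m(S)$ and reward $\rho(S)=1$ if $m(S)\ge h$ (winning), else $0$. Proportional scheme: an atomic player with stake $a_i$ in pool $C$ receives $\frac{a_i}{m(C)}\rho(C)$; non-atomic players receive $\rho(C)/m(C)$ per unit of stake. A partition into winning pools is a Nash equilibrium if no atomic player can strictly increase her payment by moving to another pool or opening a new pool alone, and no non-atomic player can strictly increase her per-unit reward by moving to another pool. Sybil strategy: given $\Pi$, an atomic player $i$ splits her stake into nonnegative amounts $s_1,\dots,s_t$ summing to $a_i$ and joins $t$ distinct pools of $\Pi$ (her original pool being taken without her), contributing $s_j$ to the $j$-th as a separate atomic identity; others stay put; her payoff is the sum of the payments to her identities. The scheme is Sybil-proof with respect to $\Pi$ if no atomic player becomes strictly better off by a Sybil strategy. *)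

From HB Require Import structures.
From mathcomp Require Import all_boot all_order all_algebra.
From mathcomp Require Import reals.
Set Implicit Arguments. Unset Strict Implicit. Unset Printing Implicit Defensive.
Import Order.TTheory GRing.Theory Num.Theory.
Local Open Scope ring_scope.

(* A partition of the players of an instance with n atomic players (indexed by
   'I_n) and a continuum of non-atomic players.  Pools are labelled by
   'I_(npools P); [pool P i] is the pool of atomic player i, and
   [namass P j] is the measure of the set of non-atomic players in pool j. *)
Record ppartition (R : Type) (n : nat) := Partition {
  npools : nat;
  pool : 'I_n -> 'I_npools;
  namass : 'I_npools -> R }.

Arguments npools {R n} p.
Arguments pool {R n} p _.
Arguments namass {R n} p _.

Section Defs.
Local Unset Implicit Arguments.
Variables (R : realFieldType) (n : nat).
Variables (a : 'I_n -> R) (h M : R).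

Definition valid (P : ppartition R n) : Prop :=
  (forall j, 0 <= namass P j) /\
  \sum_(j < npools P) namass P j = M /\
  (forall j, (exists i, pool P i = j) \/ 0 < namass P j).

Definition stake (P : ppartition R n) (j : 'I_(npools P)) : R :=
  \sum_(i | pool P i == j) a i + namass P j.

Definition rho (x : R) : R := if h <= x then 1 else 0.

Definition nwin (P : ppartition R n) : nat :=
  #|[set j : 'I_(npools P) | h <= stake P j]|.

Definition sorted_stakes (P : ppartition R n) : seq R :=
  sort <=%R [seq stake P j | j <- enum 'I_(npools P)].

Fixpoint lexle (s t : seq R) : bool :=
  match s, t with
  | [::], _ => true
  | _ :: _, [::] => false
  | x :: s', y :: t' => (x < y) || ((x == y) && lexle s' t')
  end.

Definition payment (P : ppartition R n) (i : 'I_n) : R :=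
  a i / stake P (pool P i) * rho (stake P (pool P i)).

Definition nash (P : ppartition R n) : Prop :=
  (forall j, h <= stake P j) /\
  (forall i (D : 'I_(npools P)), D != pool P i ->
     a i / (stake P D + a i) * rho (stake P D + a i) <= payment P i) /\
  (forall i, a i / a i * rho (a i) <= payment P i) /\
  (forall C D : 'I_(npools P), 0 < namass P C ->
     rho (stake P D) / stake P D <= rho (stake P C) / stake P C).

Definition stake_without (P : ppartition R n) (i : 'I_n) (j : 'I_(npools P)) : R :=
  stake P j - (if pool P i == j then a i else 0).

(* Sybil strategy of player i: amount s j >= 0 placed in pool j of P (the
   pools joined are those with s j > 0; zero contributions are harmless),
   with total a i. *)
Definition sybil_payoff (P : ppartition R n) (i : 'I_n) (s : 'I_(npools P) -> R) : R :=
  \sum_(j < npools P)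
     s j / (stake_without P i j + s j) * rho (stake_without P i j + s j).

Definition sybil_proof (P : ppartition R n) : Prop :=
  forall i (s : 'I_(npools P) -> R),
    (forall j, 0 <= s j) -> \sum_(j < npools P) s j = a i ->
    sybil_payoff P i s <= payment P i.

End Defs.

Arguments valid {R n} M P.
Arguments stake {R n} a P j.
Arguments rho {R} h x.
Arguments nwin {R n} a h P.
Arguments sorted_stakes {R n} a P.
Arguments lexle {R} s t.
Arguments payment {R n} a h P i.
Arguments nash {R n} a h P.
Arguments stake_without {R n} a P i j.
Arguments sybil_payoff {R n} a h P i s.
Arguments sybil_proof {R n} a h P.

From HB Require Import structures.
From mathcomp Require Import all_boot all_order all_algebra.
From mathcomp Require Import reals.
From mathcomp Require Import lra.
Set Implicit Arguments. Unset Strict Implicit. Unset Printing Implicit Defensive.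
Import Order.TTheory GRing.Theory Num.Theory.
Local Open Scope ring_scope.

(* Take four atomic players with stakes 9, 6, 9, 6, no non-atomic mass and
   threshold 11.  The total stake 30 < 3 * 11 allows at most two winning
   pools, and with two winning pools the sorted stakes are lexicographically
   at most (15, 15), which pairing each 9 with a 6 attains.  All pools having
   the same stake makes this a Nash equilibrium.  But a 9-player can put 5
   into her old pool, raising it from 6 exactly to the threshold, and 4 into
   the other pool: 5/11 + 4/19 > 9/15. *)

Section Lexle.
Variable R : realFieldType.

Lemma lexle_refl : reflexive (@lexle R).
Proof. by elim=> //= x s IHs; rewrite eqxx IHs orbT. Qed.

Lemma size_mul_le_sum (c : R) (s : seq R) :
  all (>= c) s -> (size s)%:R * c <= \sum_(x <- s) x.
Proof.
elim: s => [|x s IHs] /=; first by rewrite big_nil mul0r.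
by move=> /andP[cx /IHs]; rewrite big_cons -add1n natrD mulrDl mul1r; apply: lerD.
Qed.

Lemma eq_nseq_of_sum_le (c : R) (k : nat) (s : seq R) :
  0 < c -> all (>= c) s -> (k <= size s)%N -> \sum_(x <- s) x <= k%:R * c ->
  s = nseq k c.
Proof.
move=> c_gt0; elim: s k => [|x s IHs] [|k] //= /andP[cx cs] le_ks.
  rewrite big_cons mul0r => sum_le0; suff: 0 < 0 :> R by rewrite ltxx.
  have := size_mul_le_sum cs.
  have : 0 <= (size s)%:R * c by rewrite mulr_ge0 // ltW.
  lra.
rewrite big_cons -add1n natrD mulrDl mul1r => le_sum.
have s_eq : s = nseq k c by apply: IHs; rewrite // -(lerD2l x); lra.
have sum_s : \sum_(y <- s) y = k%:R * c by rewrite s_eq big_nseq iter_addr_0 mulr_natl.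
by congr (_ :: _) => //; apply/eqP; rewrite eq_le cx andbT; lra.
Qed.

Lemma lexle_nseq (c : R) (k : nat) (s : seq R) :
  0 < c -> (0 < k)%N -> sorted <=%R s -> (k <= size s)%N ->
  \sum_(x <- s) x <= k%:R * c -> lexle s (nseq k c).
Proof.
case: s => [|x s] //; case: k => // k c_gt0 _ s_sorted le_ks le_sum.
have [x_lt_c|c_le_x] := ltP x c; first by rewrite /= x_lt_c.
suff -> : x :: s = nseq k.+1 c by apply: lexle_refl.
apply: eq_nseq_of_sum_le => //=; rewrite c_le_x /=.
move: s_sorted; rewrite /= le_path_sortedE => /andP[/allP x_le _].
by apply/allP => y /x_le; apply: le_trans.
Qed.

End Lexle.

Section Partitions.
Variables (R : realFieldType) (n : nat) (a : 'I_n -> R) (h M : R).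
Hypothesis a_ge0 : forall i, 0 <= a i.

Lemma sum_stake (Q : ppartition R n) :
  \sum_j stake a Q j = \sum_i a i + \sum_j namass Q j.
Proof.
by rewrite big_split /= [in RHS](partition_big (pool Q) predT).
Qed.

Lemma stake_ge0 (Q : ppartition R n) j : valid M Q -> 0 <= stake a Q j.
Proof. by case=> namass_ge0 _; rewrite addr_ge0 ?sumr_ge0. Qed.

Lemma nwin_mul_le (Q : ppartition R n) :
  valid M Q -> (nwin a h Q)%:R * h <= \sum_i a i + M.
Proof.
move=> vQ; have [_ [<- _]] := vQ; rewrite -sum_stake /nwin mulr_natl -sumr_const.
rewrite [leRHS](bigID [in [set j | h <= stake a Q j]]) /= -[leLHS]addr0.
apply: lerD; first by apply: ler_sum => j; rewrite inE.
by apply: sumr_ge0 => j _; apply: stake_ge0.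
Qed.

Lemma nwin_le_npools (Q : ppartition R n) : (nwin a h Q <= npools Q)%N.
Proof. by rewrite /nwin (leq_trans (max_card _)) ?card_ord. Qed.

Lemma size_sorted_stakes (Q : ppartition R n) : size (sorted_stakes a Q) = npools Q.
Proof. by rewrite size_sort size_map size_enum_ord. Qed.

Lemma sum_sorted_stakes (Q : ppartition R n) :
  \sum_(x <- sorted_stakes a Q) x = \sum_j stake a Q j.
Proof. by rewrite (perm_big _ (permEl (perm_sort _ _))) big_map big_enum. Qed.

Lemma lexle_sorted_stakes (Q : ppartition R n) (c : R) (k : nat) :
  valid M Q -> 0 < c -> (0 < k <= nwin a h Q)%N -> \sum_i a i + M <= k%:R * c ->
  lexle (sorted_stakes a Q) (nseq k c).
Proof.
move=> vQ c_gt0 /andP[k_gt0 k_le] le_total; have [_ [sumM _]] := vQ.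
apply: lexle_nseq => //; first exact: sort_le_sorted.
  by rewrite size_sorted_stakes (leq_trans k_le) ?nwin_le_npools.
by rewrite sum_sorted_stakes sum_stake sumM.
Qed.

Section EqualStakes.
Variables (P : ppartition R n) (c : R).
Hypotheses (stakeP : forall j, stake a P j = c) (h_le_c : h <= c).

Lemma sorted_stakes_const : sorted_stakes a P = nseq (npools P) c.
Proof.
have map_const (s : seq 'I_(npools P)) : [seq c | _ <- s] = nseq (size s) c.
  by elim: s => //= j s ->.
rewrite /sorted_stakes (eq_map stakeP) map_const size_enum_ord sort_le_id //.
by case: (npools P) => //= k; elim: k => //= k ->; rewrite lexx.
Qed.

Lemma nwin_const : nwin a h P = npools P.
Proof.
rewrite /nwin -[RHS]card_ord -cardsT.
congr #|pred_of_set _|.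
by apply/setP => j; rewrite !inE stakeP h_le_c.
Qed.

Lemma payment_const i : payment a h P i = a i / c.
Proof. by rewrite /payment stakeP /rho h_le_c mulr1. Qed.

Lemma nash_const : 0 < h -> (forall i, a i < h) -> nash a h P.
Proof.
move=> h_gt0 a_lt_h; have c_gt0 := lt_le_trans h_gt0 h_le_c.
split; first by move=> j; rewrite stakeP.
split.
  move=> i D _; rewrite payment_const stakeP /rho.
  have -> : h <= c + a i by rewrite (le_trans h_le_c) ?lerDl.
  by rewrite mulr1 ler_wpM2l // lef_pV2 ?lerDl ?posrE ?ltr_wpDr.
split.
  move=> i; rewrite payment_const /rho.
  have -> : (h <= a i) = false by rewrite leNgt a_lt_h.
  by rewrite mulr0 divr_ge0 // ltW.
by move=> C D _; rewrite !stakeP.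
Qed.

End EqualStakes.

End Partitions.

Section Example.
Variable R : realFieldType.

Definition ex_stakes (i : 'I_4) : R := if odd i then 6 else 9.

Definition ex_partition : ppartition R 4 :=
  Partition (fun i : 'I_4 => if (i < 2)%N then ord0 else ord_max : 'I_2) (fun _ => 0).

Lemma ex_stakes_bounds i : 0 < ex_stakes i < 11.
Proof. by rewrite /ex_stakes; case: ifP => _; apply/andP; split; lra. Qed.

Lemma sum_ex_stakes : \sum_i ex_stakes i = 30.
Proof. by rewrite !big_ord_recl big_ord0 /ex_stakes /=; lra. Qed.

Lemma ex_valid : valid 0 ex_partition.
Proof.
split=> //; split; first by rewrite big1.
move=> j; left.
by case: j => -[|[|]] // lt2; [exists ord0 | exists ord_max]; apply: val_inj.
Qed.

Lemma ex_stake j : stake ex_stakes ex_partition j = 15.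
Proof.
rewrite /stake addr0 big_mkcond !big_ord_recl big_ord0 /ex_stakes /=.
by case: j => -[|[|]] //= _; lra.
Qed.

Lemma ex_not_sybil_proof : ~ sybil_proof ex_stakes 11 ex_partition.
Proof.
pose split (j : 'I_2) : R := if j == ord0 then 5 else 4.
have split_ge0 j : 0 <= split j by rewrite /split; case: ifP => _; lra.
have split_sum : \sum_j split j = ex_stakes ord0.
  by rewrite !big_ord_recl big_ord0 /split /ex_stakes /=; lra.
move=> /(_ ord0 split split_ge0 split_sum).
rewrite /sybil_payoff /payment /stake_without !big_ord_recl big_ord0 !ex_stake.
rewrite /split /ex_stakes /rho /=.
have -> : 15 - 9 + 5 = 11 :> R by lra.
have -> : 15 - 0 + 4 = 19 :> R by lra.
rewrite !ifT; lra.
Qed.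

End Example.

Theorem theorem5p2 (R : realType) :
  exists (n : nat) (a : 'I_n -> R) (h M : R) (P : ppartition R n),
    [/\ 0 < h, (forall i, 0 < a i /\ a i < h), 0 <= M & valid M P] /\
    (forall Q : ppartition R n, valid M Q -> (nwin a h Q <= nwin a h P)%N) /\
    (forall Q : ppartition R n, valid M Q -> nwin a h Q = nwin a h P ->
        lexle (sorted_stakes a Q) (sorted_stakes a P)) /\
    nash a h P /\
    ~ sybil_proof a h P.
Proof.
have a_ge0 i : 0 <= ex_stakes R i by have /andP[/ltW] := ex_stakes_bounds R i.
have a_lt_h i : ex_stakes R i < 11 by have /andP[] := ex_stakes_bounds R i.
have h_gt0 : 0 < 11 :> R by rewrite ltr0n.
have h_le_15 : 11 <= 15 :> R by rewrite ler_nat.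
have nwinP : nwin (ex_stakes R) 11 (ex_partition R) = 2%N.
  by rewrite (nwin_const (@ex_stake R) h_le_15).
exists 4%N, (ex_stakes R), 11, 0, (ex_partition R); split.
  by split=> // [i|]; [apply/andP; exact: ex_stakes_bounds | exact: ex_valid].
split.
  move=> Q vQ; rewrite nwinP -ltnS -(@ltr_nat R) -(ltr_pM2r h_gt0).
  by rewrite (le_lt_trans (nwin_mul_le 11 a_ge0 vQ)) // sum_ex_stakes; lra.
split.
  move=> Q vQ; rewrite nwinP (sorted_stakes_const (@ex_stake R)) => nwinQ.
  apply: (lexle_sorted_stakes (h := 11) vQ) => /=; first by rewrite ltr0n.
    by rewrite nwinQ.
  by rewrite sum_ex_stakes; lra.
split; first by apply: (nash_const a_ge0 (@ex_stake R)).
exact: ex_not_sybil_proof.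
Qed.
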